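(* Let $f:[0,1]\times[0,1]\to\mathbb{R}$ be convex on the coordinates. Then \begin{align*} &\frac{1}{4}\int_0^1 \Big[f\Big(x,\tfrac{1}{4}\Big) + f\Big(x,\tfrac{3}{4}\Big)\Big]dx + \frac{1}{4}\int_0^1 \Big[f\Big(\tfrac{1}{4},y\Big) + f\Big(\tfrac{3}{4},y\Big)\Big]dy\\ &\leq \int_0^1\int_0^1 f(x, y)\,dx\,dy\\ &\leq \frac{1}{8}\int_0^1 \big[f(x,0) + f(x,1)\big]dx + \frac{1}{8}\int_0^1 \big[f(0,y) + f(1,y)\big]dy +\frac{1}{4}\int_0^1 f\Big(x,\tfrac{1}{2}\Big)dx+\frac{1}{4}\int_0^1 f\Big(\tfrac{1}{2},y\Big)dy. \end{align*}
   Context: A function $f:[a,b]\times[c,d]\to\mathbb{R}$ is called convex on the coordinates if for every $y\in[c,d]$ the partial map $u\mapsto f(u,y)$ is convex on $[a,b]$, and for every $x\in[a,b]$ the partial map $v\mapsto f(x,v)$ is convex on $[c,d]$. *)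

From Stdlib Require Import Reals Lra ClassicalEpsilon.
Open Scope R_scope.

Definition convex_on (a b : R) (g : R -> R) : Prop :=
  forall u v t, a <= u <= b -> a <= v <= b -> 0 <= t <= 1 ->
    g (t * u + (1 - t) * v) <= t * g u + (1 - t) * g v.

Definition convex_on_coordinates (a b c d : R) (f : R -> R -> R) : Prop :=
  (forall y, c <= y <= d -> convex_on a b (fun u => f u y)) /\
  (forall x, a <= x <= b -> convex_on c d (fun v => f x v)).

(* Total Riemann integral over [a,b]: equals RiemannInt pr whenever g is
   Riemann integrable (value independent of the proof pr); an arbitrary
   real otherwise. *)
Definition Rint (g : R -> R) (a b : R) : R :=
  epsilon (inhabits 0)
    (fun l => exists pr : Riemann_integrable g a b, RiemannInt pr = l).

From Stdlib Require Import Reals Lra Classical_Prop ClassicalEpsilon.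
From Coquelicot Require Import Coquelicot.
Open Scope R_scope.

(* For a convex g on [0,1], Hermite-Hadamard applied on [0,1/2] and on [1/2,1]
   gives (g(1/4) + g(3/4))/2 <= int_0^1 g <= (g(0) + 2 g(1/2) + g(1))/4.
   Apply this to the convex function y |-> int_0^1 f(x,y) dx, and to each row
   x |-> f(x,y) integrated over y; the average of the two estimates is the claim.
   Riemann integrability of a convex function comes from its chord slopes:
   they are bounded inside (a,b), so g is continuous there, and monotone, so g
   has one-sided limits at a and b; hence g agrees on (a,b) with a continuous
   function on [a,b]. *)

Lemma convex_on_sub a b a' b' g :
  convex_on a b g -> a <= a' -> b' <= b -> convex_on a' b' g.
Proof. intros Hg Ha Hb u v t Hu Hv Ht. apply Hg; lra. Qed.

Lemma convex_on_reflect a b g :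
  convex_on a b g -> convex_on a b (fun x => g (a + b - x)).
Proof.
  intros Hg u v t Hu Hv Ht.
  replace (a + b - (t * u + (1 - t) * v)) with (t * (a + b - u) + (1 - t) * (a + b - v)) by ring.
  apply Hg; lra.
Qed.

Definition slope (g : R -> R) (u v : R) : R := (g v - g u) / (v - u).

Lemma slope_sym g u v : slope g u v = slope g v u.
Proof.
  unfold slope. destruct (Req_dec u v) as [->|Huv]; [reflexivity|].
  field. lra.
Qed.

Lemma convex_on_chord a b g u v w : convex_on a b g ->
  a <= u -> u <= v -> v <= w -> w <= b -> u < w ->
  (w - u) * g v <= (w - v) * g u + (v - u) * g w.
Proof.
  intros Hg Hau Huv Hvw Hwb Huw.
  set (t := (w - v) / (w - u)).
  assert (Hv : t * u + (1 - t) * w = v) by (unfold t; field; lra).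
  assert (Ht : 0 <= t <= 1).
  { unfold t; split; [apply Rdiv_le_0_compat; lra|].
    apply Rle_div_l; lra. }
  assert (Hchord := Hg u w t ltac:(lra) ltac:(lra) Ht). rewrite Hv in Hchord.
  replace ((w - v) * g u + (v - u) * g w) with ((w - u) * (t * g u + (1 - t) * g w))
    by (unfold t; field; lra).
  apply Rmult_le_compat_l; lra.
Qed.

Lemma convex_on_slope_le a b g u v w : convex_on a b g ->
  a <= u -> u < v -> v < w -> w <= b ->
  slope g u v <= slope g u w <= slope g v w.
Proof.
  intros Hg Hau Huv Hvw Hwb.
  assert (Hchord := convex_on_chord a b g u v w Hg Hau (Rlt_le _ _ Huv) (Rlt_le _ _ Hvw) Hwb ltac:(lra)).
  unfold slope. split.
  - apply (Rmult_le_reg_r ((v - u) * (w - u))); [nra|].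
    replace ((g v - g u) / (v - u) * ((v - u) * (w - u))) with ((g v - g u) * (w - u)) by (field; lra).
    replace ((g w - g u) / (w - u) * ((v - u) * (w - u))) with ((g w - g u) * (v - u)) by (field; lra).
    nra.
  - apply (Rmult_le_reg_r ((w - u) * (w - v))); [nra|].
    replace ((g w - g u) / (w - u) * ((w - u) * (w - v))) with ((g w - g u) * (w - v)) by (field; lra).
    replace ((g w - g v) / (w - v) * ((w - u) * (w - v))) with ((g w - g v) * (w - u)) by (field; lra).
    nra.
Qed.

Lemma convex_on_slope_between a b g x y : convex_on a b g ->
  a < x < b -> a <= y <= b -> y <> x ->
  slope g a x <= slope g x y <= slope g x b.
Proof.
  intros Hg Hx Hy Hyx.
  destruct (Rlt_or_le y x) as [Hlt|Hle].
  - rewrite (slope_sym g x y). split.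
    + destruct (Req_dec a y) as [<-|Hay]; [lra|].
      apply (convex_on_slope_le a b g a y x Hg); lra.
    + apply (Rle_trans _ (slope g y b)); apply (convex_on_slope_le a b g y x b Hg); lra.
  - split.
    + apply (Rle_trans _ (slope g a y)); apply (convex_on_slope_le a b g a x y Hg); lra.
    + destruct (Req_dec y b) as [->|Hyb]; [lra|].
      apply (convex_on_slope_le a b g x y b Hg); lra.
Qed.

Lemma convex_on_lipschitz_at a b g x y : convex_on a b g ->
  a < x < b -> a <= y <= b ->
  Rabs (g y - g x) <= (Rabs (slope g a x) + Rabs (slope g x b)) * Rabs (y - x).
Proof.
  intros Hg Hx Hy.
  destruct (Req_dec y x) as [->|Hyx].
  { rewrite !Rminus_diag, Rabs_R0. lra. }
  replace (g y - g x) with (slope g x y * (y - x)) by (unfold slope; field; lra).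
  rewrite Rabs_mult. apply Rmult_le_compat_r; [apply Rabs_pos|].
  destruct (convex_on_slope_between a b g x y Hg Hx Hy Hyx). split_Rabs; lra.
Qed.

Lemma convex_on_continuous a b g x : convex_on a b g -> a < x < b -> continuous g x.
Proof.
  intros Hg Hx. apply continuity_pt_filterlim.
  set (K := Rabs (slope g a x) + Rabs (slope g x b)).
  assert (HK : 0 <= K) by (apply Rplus_le_le_0_compat; apply Rabs_pos).
  intros eps Heps.
  assert (Hd : 0 < eps / (K + 1)) by (apply Rdiv_lt_0_compat; lra).
  exists (Rmin (Rmin (x - a) (b - x)) (eps / (K + 1))).
  split; [repeat apply Rmin_glb_lt; lra|].
  intros y [_ Hyx]; simpl in *; unfold R_dist in *.
  pose proof (Rmin_l (Rmin (x - a) (b - x)) (eps / (K + 1))).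
  pose proof (Rmin_r (Rmin (x - a) (b - x)) (eps / (K + 1))).
  pose proof (Rmin_l (x - a) (b - x)). pose proof (Rmin_r (x - a) (b - x)).
  assert (Hy : a <= y <= b) by (split_Rabs; lra).
  apply (Rle_lt_trans _ _ _ (convex_on_lipschitz_at a b g x y Hg Hx Hy)). fold K.
  apply (Rle_lt_trans _ (K * (eps / (K + 1)))); [apply Rmult_le_compat_l; lra|].
  replace (K * (eps / (K + 1))) with (eps - eps / (K + 1)) by (field; lra). lra.
Qed.

Lemma nondecreasing_right_limit (S : R -> R) a c m0 : a < c ->
  (forall y y', a < y -> y <= y' -> y' < c -> S y <= S y') ->
  (forall y, a < y < c -> m0 <= S y) ->
  exists l, filterlim S (at_right a) (locally l).
Proof.
  intros Hac Hmono Hlow.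
  set (E := fun z => exists y, a < y < c /\ z = - S y).
  assert (HEb : bound E) by (exists (- m0); intros z [y [Hy ->]]; specialize (Hlow y Hy); lra).
  assert (HEn : exists z, E z) by (exists (- S ((a + c) / 2)); exists ((a + c) / 2); split; [lra|reflexivity]).
  destruct (completeness E HEb HEn) as [m [Hub Hlub]].
  exists (- m). intros P [eps HP].
  assert (Hy0 : exists y0, a < y0 < c /\ S y0 < - m + eps).
  { apply NNPP. intros Hno.
    assert (m <= m - eps); [|destruct eps; simpl in *; lra].
    apply Hlub. intros z [y [Hy ->]].
    destruct (Rlt_le_dec (S y) (- m + eps)); [exfalso; eauto|lra]. }
  destruct Hy0 as [y0 [Hy0 HSy0]].
  exists (mkposreal (y0 - a) ltac:(lra)). intros y Hy Hay. apply HP.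
  change (Rabs (y - a) < y0 - a) in Hy. change (Rabs (S y - - m) < eps).
  assert (Hya : y < y0) by (split_Rabs; lra).
  assert (Hmy : - S y <= m) by (apply Hub; exists y; split; [lra|reflexivity]).
  assert (S y <= S y0) by (apply Hmono; lra).
  apply Rabs_lt_between'; lra.
Qed.

Lemma convex_on_right_limit a b g : convex_on a b g -> a < b ->
  exists l, filterlim g (at_right a) (locally l).
Proof.
  intros Hg Hab.
  destruct (nondecreasing_right_limit (fun y => slope g y b) a b (slope g a b) Hab)
    as [l Hl].
  - intros y y' Hay Hyy' Hy'b. destruct (Req_dec y y') as [<-|Hne]; [lra|].
    apply (convex_on_slope_le a b g y y' b Hg); lra.
  - intros y Hy. apply (convex_on_slope_le a b g a y b Hg); lra.
  - exists (g b + (a - b) * l).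
    apply (filterlim_ext_loc (fun y => g b + (y - b) * slope g y b)).
    { exists (mkposreal (b - a) ltac:(lra)). intros y Hy Hay.
      change (Rabs (y - a) < b - a) in Hy.
      unfold slope. field. split_Rabs; lra. }
    eapply (filterlim_comp_2 (fun _ => g b) (fun y => (y - b) * slope g y b) Rplus).
    + apply filterlim_const.
    + eapply (filterlim_comp_2 (fun y => y - b) (fun y => slope g y b) Rmult);
        [| exact Hl | exact (filterlim_mult (K := R_AbsRing) (a - b) l)].
      apply (filterlim_filter_le_1 (F := locally a)).
      * intros P HP. now apply filter_le_within.
      * apply (continuity_pt_filterlim (fun y => y - b)). reg.
    + exact (filterlim_plus (V := R_NormedModule) (g b) ((a - b) * l)).
Qed.

Lemma convex_on_left_limit a b g : convex_on a b g -> a < b ->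
  exists l, filterlim g (at_left b) (locally l).
Proof.
  intros Hg Hab.
  destruct (convex_on_right_limit a b _ (convex_on_reflect a b g Hg) Hab) as [l Hl].
  exists l.
  apply (filterlim_ext (fun x => g (a + b - (a + b - x)))); [intros x; f_equal; ring|].
  apply (filterlim_comp _ _ _ (fun x => a + b - x) (fun x => g (a + b - x)) _ (at_right a)); [|exact Hl].
  intros P [eps HP]. exists eps. intros y Hy Hyb. apply HP; [|lra].
  change (Rabs (a + b - y - a) < eps). change (Rabs (y - b) < eps) in Hy.
  replace (a + b - y - a) with (- (y - b)) by ring. now rewrite Rabs_Ropp.
Qed.

Lemma convex_on_ex_RInt a b g : convex_on a b g -> a < b -> ex_RInt g a b.
Proof.
  intros Hg Hab.
  destruct (convex_on_right_limit a b g Hg Hab) as [la Hla].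
  destruct (convex_on_left_limit a b g Hg Hab) as [lb Hlb].
  destruct (C0_extension_lt g la lb a b Hab) as [h [Hh_cont [Hh_eq _]]]; auto.
  { intros c Hc. exact (convex_on_continuous a b g c Hg Hc). }
  apply (ex_RInt_ext h).
  - intros x Hx. rewrite Rmin_left, Rmax_right in Hx by lra. now apply Hh_eq.
  - apply (ex_RInt_continuous (V := R_CompleteNormedModule)). intros z _. apply Hh_cont.
Qed.

Lemma RInt_reflect (g : R -> R) a b : ex_RInt g a b -> ex_RInt (fun x => g (a + b - x)) a b ->
  RInt (fun x => g (a + b - x)) a b = RInt g a b.
Proof.
  intros Hg Hr.
  assert (Hba : ex_RInt g (-1 * a + (a + b)) (-1 * b + (a + b))).
  { replace (-1 * a + (a + b)) with b by ring. replace (-1 * b + (a + b)) with a by ring.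
    now apply ex_RInt_swap. }
  pose proof (RInt_comp_lin g (-1) (a + b) a b Hba) as E.
  replace (-1 * a + (a + b)) with b in E by ring. replace (-1 * b + (a + b)) with a in E by ring.
  rewrite (RInt_ext _ (fun x => -1 * g (a + b - x))) in E.
  2:{ intros x _. replace (-1 * x + (a + b)) with (a + b - x) by ring. reflexivity. }
  rewrite (RInt_scal (fun x => g (a + b - x))) in E by exact Hr.
  rewrite <- (opp_RInt_swap g) in E by exact Hg.
  unfold scal, opp in E; simpl in E.
  change (-1 * RInt (fun x => g (a + b - x)) a b = - RInt g a b) in E. lra.
Qed.

Lemma convex_on_RInt_le_trapezoid a b g : convex_on a b g -> a < b ->
  RInt g a b <= (b - a) * (g a + g b) / 2.
Proof.
  intros Hg Hab.
  set (chord := fun x => ((b - x) * g a + (x - a) * g b) / (b - a)).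
  set (F := fun x => (- (b - x) ^ 2 * g a + (x - a) ^ 2 * g b) / (2 * (b - a))).
  assert (Hchord : is_RInt chord a b (F b - F a)).
  { apply (is_RInt_derive F chord).
    - intros x _. unfold F, chord. auto_derive; [lra|]. field. lra.
    - intros x _. apply (continuity_pt_filterlim chord). unfold chord. reg. }
  replace ((b - a) * (g a + g b) / 2) with (F b - F a) by (unfold F; field; lra).
  rewrite <- (is_RInt_unique _ _ _ _ Hchord).
  apply RInt_le; [lra | now apply convex_on_ex_RInt | now exists (F b - F a) |].
  intros x Hx. unfold chord. apply Rle_div_r; [lra|].
  rewrite (Rmult_comm (g x)). apply (convex_on_chord a b g a x b Hg); lra.
Qed.

Lemma convex_on_midpoint_le_RInt a b g : convex_on a b g -> a < b ->
  (b - a) * g ((a + b) / 2) <= RInt g a b.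
Proof.
  intros Hg Hab.
  assert (Eg := convex_on_ex_RInt a b g Hg Hab).
  assert (Er := convex_on_ex_RInt a b _ (convex_on_reflect a b g Hg) Hab).
  assert (Hle : RInt (fun _ => 2 * g ((a + b) / 2)) a b
                <= RInt (fun x => g x + g (a + b - x)) a b).
  { apply RInt_le; [lra | apply ex_RInt_const | now apply (ex_RInt_plus g) |].
    intros x Hx.
    assert (Hmid := Hg x (a + b - x) (1/2) ltac:(lra) ltac:(lra) ltac:(lra)).
    replace (1/2 * x + (1 - 1/2) * (a + b - x)) with ((a + b) / 2) in Hmid by field.
    lra. }
  rewrite RInt_const in Hle.
  rewrite (RInt_plus g (fun x => g (a + b - x))) in Hle by assumption.
  rewrite RInt_reflect in Hle by assumption.
  change ((b - a) * (2 * g ((a + b) / 2)) <= RInt g a b + RInt g a b) in Hle.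
  lra.
Qed.

Lemma convex_on_RInt_01_bounds g : convex_on 0 1 g ->
  (g (1/4) + g (3/4)) / 2 <= RInt g 0 1 <= (g 0 + 2 * g (1/2) + g 1) / 4.
Proof.
  intros Hg.
  assert (Hl : convex_on 0 (1/2) g) by (apply (convex_on_sub 0 1); [exact Hg | lra | lra]).
  assert (Hr : convex_on (1/2) 1 g) by (apply (convex_on_sub 0 1); [exact Hg | lra | lra]).
  assert (Hsplit : RInt g 0 (1/2) + RInt g (1/2) 1 = RInt g 0 1).
  { apply (RInt_Chasles g); [apply (convex_on_ex_RInt _ _ g Hl) | apply (convex_on_ex_RInt _ _ g Hr)]; lra. }
  pose proof (convex_on_midpoint_le_RInt 0 (1/2) g Hl ltac:(lra)).
  pose proof (convex_on_midpoint_le_RInt (1/2) 1 g Hr ltac:(lra)).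
  pose proof (convex_on_RInt_le_trapezoid 0 (1/2) g Hl ltac:(lra)).
  pose proof (convex_on_RInt_le_trapezoid (1/2) 1 g Hr ltac:(lra)).
  replace ((0 + 1/2) / 2) with (1/4) in * by field.
  replace ((1/2 + 1) / 2) with (3/4) in * by field.
  lra.
Qed.

(* Coquelicot's [RInt_plus] and [RInt_scal] with the real operations spelled out,
   so that [rewrite] finds them and [lra] can use the results. *)
Lemma RInt_Rplus f g a b : ex_RInt f a b -> ex_RInt g a b ->
  RInt (fun x => f x + g x) a b = RInt f a b + RInt g a b.
Proof. apply (RInt_plus f g a b). Qed.

Lemma RInt_Rmult_l f a b k : ex_RInt f a b -> RInt (fun x => k * f x) a b = k * RInt f a b.
Proof. apply (RInt_scal f a b k). Qed.

Lemma convex_on_RInt_param (f : R -> R -> R) a b c d : a <= b ->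
  (forall y, c <= y <= d -> ex_RInt (fun x => f x y) a b) ->
  (forall x, a <= x <= b -> convex_on c d (f x)) ->
  convex_on c d (fun y => RInt (fun x => f x y) a b).
Proof.
  intros Hab Hint Hf u v t Hu Hv Ht.
  assert (Eu := Hint u Hu). assert (Ev := Hint v Hv).
  rewrite <- (RInt_Rmult_l (fun x => f x u)) by exact Eu.
  rewrite <- (RInt_Rmult_l (fun x => f x v)) by exact Ev.
  assert (Etu : ex_RInt (fun x => t * f x u) a b) by now apply (ex_RInt_scal (V := R_NormedModule)).
  assert (Etv : ex_RInt (fun x => (1 - t) * f x v) a b) by now apply (ex_RInt_scal (V := R_NormedModule)).
  rewrite <- RInt_Rplus by assumption.
  apply RInt_le; [exact Hab | apply Hint; nra | now apply (ex_RInt_plus (V := R_NormedModule)) |].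
  intros x Hx. apply (Hf x); lra.
Qed.

Lemma RInt_convex_rows_01_bounds (f : R -> R -> R) :
  (forall y, 0 <= y <= 1 -> convex_on 0 1 (fun x => f x y)) ->
  (forall x, 0 <= x <= 1 -> ex_RInt (f x) 0 1) ->
  ex_RInt (fun y => RInt (fun x => f x y) 0 1) 0 1 ->
  (RInt (f (1/4)) 0 1 + RInt (f (3/4)) 0 1) / 2
    <= RInt (fun y => RInt (fun x => f x y) 0 1) 0 1
    <= (RInt (f 0) 0 1 + 2 * RInt (f (1/2)) 0 1 + RInt (f 1) 0 1) / 4.
Proof.
  intros Hrow Hcol HF.
  set (F := fun y => RInt (fun x => f x y) 0 1) in *.
  assert (Hbounds : forall y, 0 < y < 1 ->
    (f (1/4) y + f (3/4) y) / 2 <= F y <= (f 0 y + 2 * f (1/2) y + f 1 y) / 4)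
    by (intros y Hy; apply (convex_on_RInt_01_bounds (fun x => f x y)), Hrow; lra).
  assert (E0 := Hcol 0 ltac:(lra)). assert (E1 := Hcol 1 ltac:(lra)).
  assert (E14 := Hcol (1/4) ltac:(lra)). assert (E34 := Hcol (3/4) ltac:(lra)).
  assert (E12 : ex_RInt (fun y => 2 * f (1/2) y) 0 1)
    by (apply (ex_RInt_scal (V := R_NormedModule)), Hcol; lra).
  assert (E01 : ex_RInt (fun y => f 0 y + f 1 y) 0 1)
    by now apply (ex_RInt_plus (V := R_NormedModule)).
  split.
  - assert (Hle : RInt (fun y => f (1/4) y + f (3/4) y) 0 1 <= RInt (fun y => 2 * F y) 0 1).
    { apply RInt_le; [lra | now apply (ex_RInt_plus (V := R_NormedModule))
        | now apply (ex_RInt_scal (V := R_NormedModule)) |].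
      intros y Hy. specialize (Hbounds y Hy). lra. }
    rewrite RInt_Rplus, RInt_Rmult_l in Hle by assumption. lra.
  - assert (Hle : RInt (fun y => 4 * F y) 0 1
                  <= RInt (fun y => f 0 y + f 1 y + 2 * f (1/2) y) 0 1).
    { apply RInt_le; [lra | now apply (ex_RInt_scal (V := R_NormedModule))
        | now apply (ex_RInt_plus (V := R_NormedModule)) |].
      intros y Hy. specialize (Hbounds y Hy). lra. }
    rewrite RInt_Rmult_l, (RInt_Rplus (fun y => f 0 y + f 1 y)), RInt_Rplus, RInt_Rmult_l in Hle
      by (assumption || (apply Hcol; lra)).
    lra.
Qed.

Lemma Rint_RInt g a b : ex_RInt g a b -> Rint g a b = RInt g a b.
Proof.
  intros Hg. unfold Rint.
  destruct (epsilon_spec (inhabits 0)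
              (fun l => exists pr : Riemann_integrable g a b, RiemannInt pr = l)
              (ex_intro _ _ (ex_intro _ (ex_RInt_Reals_0 _ _ _ Hg) eq_refl)))
    as [pr <-].
  symmetry. apply RInt_Reals.
Qed.

Lemma Rint_Rplus f g a b : ex_RInt f a b -> ex_RInt g a b ->
  Rint (fun x => f x + g x) a b = RInt f a b + RInt g a b.
Proof.
  intros Hf Hg. rewrite Rint_RInt by now apply (ex_RInt_plus (V := R_NormedModule)).
  now apply RInt_Rplus.
Qed.

Theorem corollary1 (f : R -> R -> R) :
  convex_on_coordinates 0 1 0 1 f ->
  (1/4) * Rint (fun x => f x (1/4) + f x (3/4)) 0 1
    + (1/4) * Rint (fun y => f (1/4) y + f (3/4) y) 0 1
  <= Rint (fun y => Rint (fun x => f x y) 0 1) 0 1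
  /\
  Rint (fun y => Rint (fun x => f x y) 0 1) 0 1
  <= (1/8) * Rint (fun x => f x 0 + f x 1) 0 1
     + (1/8) * Rint (fun y => f 0 y + f 1 y) 0 1
     + (1/4) * Rint (fun x => f x (1/2)) 0 1
     + (1/4) * Rint (fun y => f (1/2) y) 0 1.
Proof.
  intros [Hrow Hcol].
  assert (Erow : forall y, 0 <= y <= 1 -> ex_RInt (fun x => f x y) 0 1)
    by (intros y Hy; apply convex_on_ex_RInt; [apply Hrow|]; lra).
  assert (Ecol : forall x, 0 <= x <= 1 -> ex_RInt (f x) 0 1)
    by (intros x Hx; apply convex_on_ex_RInt; [apply Hcol|]; lra).
  set (F := fun y => RInt (fun x => f x y) 0 1).
  assert (HF : convex_on 0 1 F) by (apply convex_on_RInt_param; auto; lra).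
  assert (EF : ex_RInt F 0 1) by (apply convex_on_ex_RInt; auto; lra).
  assert (Houter : Rint (fun y => Rint (fun x => f x y) 0 1) 0 1 = RInt F 0 1).
  { assert (Hin : forall y, Rmin 0 1 < y < Rmax 0 1 -> Rint (fun x => f x y) 0 1 = F y).
    { intros y Hy. rewrite Rmin_left, Rmax_right in Hy by lra. apply Rint_RInt, Erow; lra. }
    rewrite Rint_RInt by (apply (ex_RInt_ext F); [intros; symmetry; auto | exact EF]).
    now apply RInt_ext. }
  rewrite Houter.
  rewrite (Rint_Rplus (fun x => f x (1/4))) by (apply Erow; lra).
  rewrite (Rint_Rplus (fun x => f x 0)) by (apply Erow; lra).
  rewrite (Rint_Rplus (f (1/4)) (f (3/4))) by (apply Ecol; lra).
  rewrite (Rint_Rplus (f 0) (f 1)) by (apply Ecol; lra).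
  rewrite (Rint_RInt (fun x => f x (1/2))) by (apply Erow; lra).
  rewrite (Rint_RInt (f (1/2))) by (apply Ecol; lra).
  destruct (convex_on_RInt_01_bounds F HF) as [HFl HFu].
  destruct (RInt_convex_rows_01_bounds f Hrow Ecol EF) as [HCl HCu].
  unfold F in HFl, HFu. cbv beta in HFl, HFu. fold F in HFl, HFu, HCl, HCu.
  split; lra.
Qed.
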